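(* Let $S, U, M \ge 1$ be integers and let $\mu_Q \in \mathbb{R}_{+}^{S \times U}$ with rows $\mu_{q^{(1)}}, \dots, \mu_{q^{(S)}} \in \mathbb{R}_+^{U}$. Let $\mathbb{N} = \{0,1,2,\dots\}$ and let $\preceq$ (resp. $\succeq$) denote entrywise $\le$ (resp. $\ge$). Say that a subset $\mathcal{M} \subseteq \{1,\dots,S\}$ \emph{suffices for minimum matching} if for every agent distribution $X \in \mathbb{N}^{M \times S}$ there exists $\hat X \in \mathbb{N}^{M \times S}$ whose columns indexed by $s \notin \mathcal{M}$ are identically zero and such that $X \mu_Q \preceq \hat X \mu_Q$. Then $\mathcal{M}$ suffices for minimum matching if and only if for every $\tilde s \in \{1,\dots,S\} \setminus \mathcal{M}$ there exist nonnegative integers $\alpha_{s\tilde s} \in \mathbb{N}$, $s \in \mathcal{M}$, with $$\sum_{s \in \mathcal{M}} \alpha_{s\tilde s}\, \mu_{q^{(s)}} \succeq \mu_{q^{(\tilde s)}}.$$ Consequently, the minspecies cardinality for minimum matching, $\mathcal{D}_{\mathcal{G}_2}(\mu_Q)$ (the minimum cardinality of a subset $\mathcal{M}$ that suffices for minimum matching), equals $$\min\Big\{ |\mathcal{M}_2| : \mathcal{M}_2 \subseteq \{1,\dots,S\},\ \forall \tilde s \notin \mathcal{M}_2\ \exists (\alpha_{s\tilde s})_{s\in\mathcal{M}_2} \in \mathbb{N}^{\mathcal{M}_2} \text{ with } \textstyle\sum_{s \in \mathcal{M}_2} \alpha_{s\tilde s}\, \mu_{q^{(s)}} \succeq \mu_{q^{(\tilde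 s)}} \Big\}.$$
   Context: A heterogeneous team consists of $S$ species; $\mu_Q$ is the expected species-trait matrix whose $(s,u)$ entry is the expected value of trait $u$ for an agent of species $s$. There are $M$ tasks; an agent distribution is a matrix $X \in \mathbb{N}^{M\times S}$ whose $(i,s)$ entry is the number of agents of species $s$ assigned to task $i$, and the resulting expected task-trait distribution is $X\mu_Q \in \mathbb{R}_+^{M\times U}$. The minimum-matching goal for a desired trait distribution $Y^*$ requires $Y^* \preceq X\mu_Q$ entrywise (over-provisioning allowed). The number of available agents per species is not bounded in this statement. *)

From HB Require Import structures.
From mathcomp Require Import all_boot all_order all_algebra.
Set Implicit Arguments. Unset Strict Implicit. Unset Printing Implicit Defensive.
Import Order.TTheory GRing.Theory Num.Theory.
Local Open Scope ring_scope.

Definition natmx (R : realFieldType) m n (X : 'M[nat]_(m, n)) : 'M[R]_(m, n) :=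
  map_mx (fun k : nat => k%:R) X.

Definition task_traits (R : realFieldType) (M S U : nat)
  (X : 'M[nat]_(M, S)) (mu : 'M[R]_(S, U)) : 'M[R]_(M, U) :=
  natmx R X *m mu.

Definition suffices_minmatch (R : realFieldType) (S U M : nat)
  (mu : 'M[R]_(S, U)) (Ms : {set 'I_S}) : Prop :=
  forall X : 'M[nat]_(M, S), exists Xh : 'M[nat]_(M, S),
    (forall (i : 'I_M) (s : 'I_S), s \notin Ms -> Xh i s = 0%N) /\
    (forall (i : 'I_M) (u : 'I_U),
        task_traits X mu i u <= task_traits Xh mu i u).

Definition int_dominated (R : realFieldType) (S U : nat)
  (mu : 'M[R]_(S, U)) (Ms : {set 'I_S}) : Prop :=
  forall st : 'I_S, st \notin Ms ->
    exists alpha : 'I_S -> nat,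
      forall u : 'I_U, mu st u <= \sum_(s in Ms) (alpha s)%:R * mu s u.

Definition is_min_card (S : nat) (P : {set 'I_S} -> Prop) (n : nat) : Prop :=
  (exists A : {set 'I_S}, P A /\ #|A| = n) /\
  (forall A : {set 'I_S}, P A -> (n <= #|A|)%N).

From HB Require Import structures.
From mathcomp Require Import all_boot all_order all_algebra.
Import Order.TTheory GRing.Theory Num.Theory.
Local Open Scope ring_scope.

(* Row i of the task-trait matrix X mu is the nonnegative
   integer combination  sum_s X_is mu_s  of the species rows.
   - Necessity: put a single agent of a species st outside Ms on one task.
     A replacement Xh supported on Ms must dominate mu_st on that task, so
     the entries of Xh in that row are the required coefficients alpha.
   - Sufficiency: fix coefficients alpha_{st,s} for every st outside Ms and
     replace every agent of species st by alpha_{st,s} agents of each s in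
     Ms.  By linearity of X |-> X mu and monotonicity of multiplication by
     nonnegative counts, the new distribution dominates the old one.
   The minimum-cardinality statement then follows from the general fact
   that pointwise-equivalent predicates have the same minimum cardinality.
   Neither direction uses the nonnegativity of mu: the agent counts are
   nonnegative, which is all that the monotonicity step needs. *)

Section MinimumMatching.

Variables (R : realFieldType) (S U M : nat) (mu : 'M[R]_(S, U)).

Lemma task_traitsE (X : 'M[nat]_(M, S)) i u :
  task_traits X mu i u = \sum_s (X i s)%:R * mu s u.
Proof. by rewrite !mxE; apply: eq_bigr => s _; rewrite mxE. Qed.

Lemma task_traits_supported (Ms : {set 'I_S}) (X : 'M[nat]_(M, S)) i u :
  (forall s, s \notin Ms -> X i s = 0%N) ->
  task_traits X mu i u = \sum_(s in Ms) (X i s)%:R * mu s u.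
Proof.
move=> X0; rewrite task_traitsE (bigID (mem Ms)) /= [X in _ + X]big1 ?addr0 //.
by move=> s /X0 ->; rewrite mul0r.
Qed.

Definition single_agent (i0 : 'I_M) (st : 'I_S) : 'M[nat]_(M, S) :=
  \matrix_(i, s) ((i == i0) && (s == st) : nat).

Lemma task_traits_single i0 st u :
  task_traits (single_agent i0 st) mu i0 u = mu st u.
Proof.
rewrite task_traitsE (bigD1 st) //= big1 ?addr0 => [|s /negbTE sst].
  by rewrite mxE !eqxx mul1r.
by rewrite mxE eqxx sst mul0r.
Qed.

Lemma suffices_int_dominated (Ms : {set 'I_S}) :
  (0 < M)%N -> suffices_minmatch M mu Ms -> int_dominated mu Ms.
Proof.
move=> M_gt0 suff st _; pose i0 : 'I_M := Ordinal M_gt0.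
have [Xh [Xh0 Xh_dom]] := suff (single_agent i0 st).
exists (Xh i0) => u.
by rewrite -(task_traits_single i0) -(task_traits_supported _ _ _ _ (Xh0 i0)).
Qed.

Definition substitute (Ms : {set 'I_S}) (alpha : 'I_S -> 'I_S -> nat)
    (X : 'M[nat]_(M, S)) : 'M[nat]_(M, S) :=
  \matrix_(i, s) (if s \in Ms then
                    (X i s + \sum_(st | st \notin Ms) X i st * alpha st s)%N
                  else 0%N).

Lemma task_traits_substitute (Ms : {set 'I_S}) (alpha : 'I_S -> 'I_S -> nat)
    (X : 'M[nat]_(M, S)) i u :
  task_traits (substitute Ms alpha X) mu i u =
  \sum_(s in Ms) (X i s)%:R * mu s u +
  \sum_(st | st \notin Ms) (X i st)%:R *
    \sum_(s in Ms) (alpha st s)%:R * mu s u.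
Proof.
rewrite (task_traits_supported Ms) => [|s /negbTE sMs]; last by rewrite mxE sMs.
under [X in _ = _ + X]eq_bigr do rewrite big_distrr.
rewrite /= (exchange_big_dep (mem Ms)) //= -big_split /=.
apply: eq_bigr => s sMs; rewrite mxE sMs natrD mulrDl natr_sum mulr_suml.
congr (_ + _); apply: eq_big => [st | st _]; first by rewrite andbT.
by rewrite natrM mulrA.
Qed.

Lemma substitute_dominates (Ms : {set 'I_S}) (alpha : 'I_S -> 'I_S -> nat)
    (X : 'M[nat]_(M, S)) i u :
  (forall st, st \notin Ms ->
     forall u, mu st u <= \sum_(s in Ms) (alpha st s)%:R * mu s u) ->
  task_traits X mu i u <= task_traits (substitute Ms alpha X) mu i u.
Proof.
move=> dom; rewrite task_traits_substitute task_traitsE (bigID (mem Ms)) /=.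
rewrite lerD2l; apply: ler_sum => st /dom stP.
by rewrite ler_wpM2l.
Qed.

Lemma int_dominated_suffices (Ms : {set 'I_S}) :
  int_dominated mu Ms -> suffices_minmatch M mu Ms.
Proof.
move=> dom X.
have [alpha alphaP] : exists alpha : 'I_S -> 'I_S -> nat, forall st,
    st \notin Ms -> forall u, mu st u <= \sum_(s in Ms) (alpha st s)%:R * mu s u.
  have alpha_st st : exists a : 'I_S -> nat, st \notin Ms ->
      forall u, mu st u <= \sum_(s in Ms) (a s)%:R * mu s u.
    have [/dom [a aP] | stMs] := boolP (st \notin Ms); first by exists a.
    by exists (fun=> 0%N) => /negP.
  exact: (@fin_all_exists _ (fun=> 'I_S -> nat) _ alpha_st).
exists (substitute Ms alpha X); split; last by move=> i u; apply: substitute_dominates.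
by move=> i s /negbTE sMs; rewrite mxE sMs.
Qed.

End MinimumMatching.

Lemma is_min_card_equiv (S : nat) (P Q : {set 'I_S} -> Prop) n :
  (forall A, P A <-> Q A) -> is_min_card P n -> is_min_card Q n.
Proof.
move=> PQ [[A [/PQ QA cardA]] minP]; split; first by exists A.
by move=> B /PQ; apply: minP.
Qed.

Theorem proposition2 (R : realFieldType) (S U M : nat)
  (hS : (0 < S)%N) (hU : (0 < U)%N) (hM : (0 < M)%N)
  (mu : 'M[R]_(S, U)) (hmu : forall s u, 0 <= mu s u) :
  (forall Ms : {set 'I_S},
      suffices_minmatch M mu Ms <-> int_dominated mu Ms) /\
  (forall n : nat,
      is_min_card (suffices_minmatch M mu) n <->
      is_min_card (int_dominated mu) n).
Proof.
have equiv Ms : suffices_minmatch M mu Ms <-> int_dominated mu Ms.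
  by split; [exact: suffices_int_dominated | exact: int_dominated_suffices].
split=> // n; split; apply: is_min_card_equiv => // Ms.
by split; apply equiv.
Qed.
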